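(* Let $b,\beta,\beta'\in\mathbb{R}$, $\gamma>0$, $\gamma'\ge0$ and $c\ge-\gamma$. Then \[ \mu_{b,c,\beta,\gamma}\rhd\mu_{b+\beta,\,c+\gamma,\,\beta',\,\gamma'}=\mu_{b,c,\beta+\beta',\gamma+\gamma'}. \] In particular, for normalized free Meixner distributions $\mu_{b,c}=\mu_{b,c,0,1}$ with $c\ge-1$, $\mu_{b,c}\rhd\mu_{b,c+1}=\mu_{b,c}^{\boxplus2}$.
   Context: For real $b,c,\beta,\gamma$ with $\gamma\ge0$ and $c+\gamma\ge0$, the free Meixner distribution $\mu_{b,c,\beta,\gamma}$ is the compactly supported probability measure on $\mathbb{R}$ with Jacobi parameters $(\beta_0,\beta_1,\beta_2,\dots)=(\beta,b+\beta,b+\beta,\dots)$ and $(\gamma_0,\gamma_1,\dots)=(\gamma,c+\gamma,c+\gamma,\dots)$, i.e. whose Cauchy transform $G(z)=\int\frac{d\mu(x)}{z-x}$ has the continued fraction expansion $1/(z-\beta_0-\gamma_0/(z-\beta_1-\gamma_1/(z-\beta_2-\cdots)))$. For probability measures $\mu,\nu$ with $F_\mu=1/G_\mu$, the monotone convolution $\mu\rhd\nu$ is the probability measure with $F_{\mu\rhd\nu}=F_\mu\circ F_\nu$. $\boxplus$ is free convolution. *)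

From Stdlib Require Import Reals.
Open Scope R_scope.

Record C := mkC { Re : R; Im : R }.
Definition Cadd (z w : C) : C := mkC (Re z + Re w) (Im z + Im w).
Definition Csub (z w : C) : C := mkC (Re z - Re w) (Im z - Im w).
Definition Cmul (z w : C) : C :=
  mkC (Re z * Re w - Im z * Im w) (Re z * Im w + Im z * Re w).
Definition RtoC (x : R) : C := mkC x 0.
Definition Cnorm2 (z : C) : R := Re z * Re z + Im z * Im z.
Definition Cinv (z : C) : C := mkC (Re z / Cnorm2 z) (- Im z / Cnorm2 z).
Definition Cnorm (z : C) : R := sqrt (Cnorm2 z).

(** Jacobi parameters of the free Meixner distribution mu_{b,c,beta,gamma}:
    (beta, b+beta, b+beta, ...) and (gamma, c+gamma, c+gamma, ...). *)
Definition jac_beta (b beta : R) (n : nat) : R :=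
  match n with O => beta | S _ => b + beta end.
Definition jac_gamma (c gamma : R) (n : nat) : R :=
  match n with O => gamma | S _ => c + gamma end.

(** Truncated continued fraction starting at level k, of depth n:
    cfd 0 k z = 1/(z - a_k),
    cfd (n+1) k z = 1/(z - a_k - g_k * cfd n (k+1) z). *)
Fixpoint cfd (a g : nat -> R) (n k : nat) (z : C) : C :=
  match n with
  | O => Cinv (Csub z (RtoC (a k)))
  | S m => Cinv (Csub (Csub z (RtoC (a k))) (Cmul (RtoC (g k)) (cfd a g m (S k) z)))
  end.

(** A "Cauchy-transform relation": [G z g] means G(z) = g. *)
Definition CTrel := C -> C -> Prop.

(** The Cauchy transform of the measure with Jacobi parameters (a,g), defined
    as the value of the continued fraction, i.e. the limit of its convergents. *)
Definition cf_value (a g : nat -> R) : CTrel := fun z w =>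
  forall eps : R, 0 < eps ->
    exists N : nat, forall n : nat, (N <= n)%nat -> Cnorm (Csub (cfd a g n 0 z) w) < eps.

Definition G_fm (b c beta gamma : R) : CTrel :=
  cf_value (jac_beta b beta) (jac_gamma c gamma).

(** Monotone convolution: mu3 = mu1 |> mu2 iff F3 = F1 o F2 on the upper half
    plane, where F = 1/G; equivalently G3(z) = G1(1/G2(z)). *)
Definition monotone_conv_eq (G1 G2 G3 : CTrel) : Prop :=
  forall z : C, 0 < Im z ->
    exists g2 g1 : C, G2 z g2 /\ G1 (Cinv g2) g1 /\ G3 z g1.

(** Free convolution (compactly supported case), via Voiculescu's R-transform:
    mu3 = mu1 [+] mu2 iff there are bounded functions R1, R2 on a punctured disc
    around 0 with G1(R1(w)+1/w) = w, G2(R2(w)+1/w) = w and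
    G3(R1(w)+R2(w)+1/w) = w there (so R3 = R1 + R2). *)
Definition free_conv_eq (G1 G2 G3 : CTrel) : Prop :=
  exists r M : R, 0 < r /\
  exists R1 R2 : C -> C,
    forall w : C, 0 < Cnorm w < r ->
      Cnorm (R1 w) <= M /\ Cnorm (R2 w) <= M /\
      G1 (Cadd (R1 w) (Cinv w)) w /\
      G2 (Cadd (R2 w) (Cinv w)) w /\
      G3 (Cadd (Cadd (R1 w) (R2 w)) (Cinv w)) w.

From Pilot Require Import Defs.
From Stdlib Require Import Reals.
Open Scope R_scope.
From Stdlib Require Import Lra Psatz ClassicalEpsilon.
From Coquelicot Require Import Coquelicot.

(* For the Jacobi parameters (beta, a, a, ...), (gamma, g, g, ...)
   the n-th convergent of the continued fraction at x is 1/(x - beta - gamma t_n),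
   where t_n is the n-th iterate from 0 of the Moebius map
   phi(t) = 1/den a g x t,  den a g x t = x - a - g t.
   If T is a fixed point of phi with |g| |T|^2 < 1 (the attracting one; the other
   fixed point is 1/(g T)), and the orbit stays away from the pole of phi, then
   t_n -> T geometrically, so G(x) = 1/(x - beta - gamma T) (G_fm_of_fixed).
   - Monotone part: for Im z > 0 take the attracting fixed point T of the common
     tail map of mu_2 and mu_3 (parameters b+beta+beta', c+gamma+gamma').  Since
     den a g (den a' g' z T) T = den (a+a') (g+g') z T (den_compose), the same T is
     the attracting fixed point of the tail of mu_{b,c,beta,gamma} at the point
     F = 1/G_2(z), and G_1(F) = G_3(z).
   - Free part: for small w let R(w) be the small fixed point of the tail map of
     mu_{b,c,0,1} at 1/w; at z = gamma R(w) + 1/w the same R(w) is the fixed point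
     of the tail of mu_{b,c,0,gamma}, whence G(z) = w for gamma = 1 and gamma = 2,
     i.e. R(w) is the R-transform and R_{mu^2} = 2 R_mu. *)

Definition toC (z : Defs.C) : C := (Defs.Re z, Defs.Im z).
Definition ofC (z : C) : Defs.C := Defs.mkC (fst z) (snd z).

Lemma toC_ofC (z : C) : toC (ofC z) = z.
Proof. destruct z; reflexivity. Qed.

Lemma toC_sub (z w : Defs.C) : toC (Defs.Csub z w) = (toC z - toC w)%C.
Proof. unfold toC, Defs.Csub, Cminus, Cplus, Copp; simpl. f_equal; ring. Qed.

Lemma toC_add (z w : Defs.C) : toC (Defs.Cadd z w) = (toC z + toC w)%C.
Proof. unfold toC, Defs.Cadd, Cplus; simpl. f_equal; ring. Qed.

Lemma toC_mul (z w : Defs.C) : toC (Defs.Cmul z w) = (toC z * toC w)%C.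
Proof. unfold toC, Defs.Cmul, Cmult; simpl. f_equal; ring. Qed.

Lemma toC_inv (z : Defs.C) : toC (Defs.Cinv z) = Cinv (toC z).
Proof.
  unfold toC, Defs.Cinv, Cinv, Defs.Cnorm2; simpl.
  f_equal; unfold Rdiv; f_equal; f_equal; ring.
Qed.

Lemma toC_R (x : R) : toC (Defs.RtoC x) = RtoC x.
Proof. reflexivity. Qed.

Lemma Cnorm_toC (z : Defs.C) : Defs.Cnorm z = Cmod (toC z).
Proof. unfold Defs.Cnorm, Cmod, Defs.Cnorm2, toC; simpl. f_equal; ring. Qed.

Lemma Cmod_rev (u v : C) : Cmod u - Cmod v <= Cmod (u - v)%C.
Proof.
  pose proof (Cmod_triangle (u - v)%C v) as H.
  replace (u - v + v)%C with u in H by ring. lra.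
Qed.

Lemma Cmod_Rmul (g : R) (t : C) : Cmod (RtoC g * t)%C = Rabs g * Cmod t.
Proof. rewrite Cmod_mult, Cmod_R. reflexivity. Qed.

Lemma Im_le_Cmod (u : C) : Im u <= Cmod u.
Proof.
  pose proof (Rmax_Cmod u). pose proof (Rmax_r (Rabs (fst u)) (Rabs (snd u))).
  pose proof (Rle_abs (snd u)). change (Im u) with (snd u). lra.
Qed.

Lemma nz_of_Im_pos (u : C) : 0 < Im u -> u <> 0%C.
Proof. intro H. apply Cmod_gt_0. pose proof (Im_le_Cmod u). lra. Qed.

Lemma Im_Cinv (u : C) : Im (Cinv u) = - Im u / (Re u ^ 2 + Im u ^ 2).
Proof. destruct u. reflexivity. Qed.

Lemma Im_Cinv_neg (u : C) : 0 < Im u -> Im (Cinv u) < 0.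
Proof.
  intro H. rewrite Im_Cinv. assert (0 < Re u ^ 2 + Im u ^ 2) by (simpl; nra).
  assert (0 < / (Re u ^ 2 + Im u ^ 2)) by (apply Rinv_0_lt_compat; lra).
  unfold Rdiv. nra.
Qed.

Lemma Im_Cinv_nonpos (u : C) : 0 <= Im u -> Im (Cinv u) <= 0.
Proof.
  intro H. destruct (Rle_lt_or_eq_dec 0 (Im u) H) as [Hp | H0].
  - apply Rlt_le, Im_Cinv_neg, Hp.
  - rewrite Im_Cinv, <- H0. unfold Rdiv. rewrite Ropp_0, Rmult_0_l. lra.
Qed.

Lemma C_sqrt_exists (d : C) : exists s, (s * s = d)%C.
Proof.
  destruct d as [p q].
  set (r := sqrt (p * p + q * q)).
  assert (r0 : 0 <= r) by apply sqrt_pos.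
  assert (r2 : r * r = p * p + q * q) by (apply sqrt_sqrt; nra).
  assert (rp : -r <= p <= r) by (split; nra).
  set (A := sqrt ((r + p) / 2)). set (B := sqrt ((r - p) / 2)).
  assert (A2 : A * A = (r + p) / 2) by (apply sqrt_sqrt; lra).
  assert (B2 : B * B = (r - p) / 2) by (apply sqrt_sqrt; lra).
  assert (A0 : 0 <= A) by apply sqrt_pos.
  assert (B0 : 0 <= B) by apply sqrt_pos.
  assert (AB2 : (2 * A * B) * (2 * A * B) = q * q).
  { replace ((2 * A * B) * (2 * A * B)) with (4 * (A * A) * (B * B)) by ring.
    rewrite A2, B2. nra. }
  destruct (Rle_dec 0 q) as [q0 | q0].
  - exists (A, B). unfold Cmult; simpl. f_equal; [nra|].
    assert (2 * A * B = q) by (apply Rsqr_inj; unfold Rsqr; nra). nra.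
  - exists (A, - B). unfold Cmult; simpl. f_equal; [nra|].
    assert (2 * A * B = - q) by (apply Rsqr_inj; unfold Rsqr; nra). nra.
Qed.

Definition den (a g : R) (x t : C) : C := (x - RtoC a - RtoC g * t)%C.

Fixpoint tail_iter (a g : R) (x : C) (n : nat) : C :=
  match n with
  | O => 0%C
  | S m => Cinv (den a g x (tail_iter a g x m))
  end.

(* From level 1 on the parameters are constant, so the tail of the truncated
   continued fraction is an orbit of the Moebius map ... *)
Lemma cfd_tail (b c beta gamma : R) (z : Defs.C) : forall n k,
  toC (cfd (jac_beta b beta) (jac_gamma c gamma) n (S k) z) =
  tail_iter (b + beta) (c + gamma) (toC z) (S n).
Proof.
  induction n as [|n IH]; intro k; simpl cfd.
  - rewrite toC_inv, toC_sub, toC_R. simpl. unfold den. f_equal. ring.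
  - rewrite toC_inv, !toC_sub, toC_mul, !toC_R, IH. reflexivity.
Qed.

Lemma cfd_top (b c beta gamma : R) (z : Defs.C) (n : nat) :
  toC (cfd (jac_beta b beta) (jac_gamma c gamma) n 0 z) =
  Cinv (den beta gamma (toC z) (tail_iter (b + beta) (c + gamma) (toC z) n)).
Proof.
  destruct n; simpl cfd.
  - rewrite toC_inv, toC_sub, toC_R. simpl. unfold den. f_equal. ring.
  - rewrite toC_inv, !toC_sub, toC_mul, !toC_R, cfd_tail. reflexivity.
Qed.

(* Composing the shifts of two Moebius maps at the same point t adds the
   parameters: this is the algebraic heart of the monotone convolution identity. *)
Lemma den_compose (a g a' g' : R) (x t : C) :
  den a g (den a' g' x t) t = den (a + a') (g + g') x t.
Proof. unfold den. rewrite !RtoC_plus. ring. Qed.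

Lemma Im_den (a g : R) (x t : C) : Im (den a g x t) = Im x - g * Im t.
Proof. destruct x, t. unfold den, Im, Cminus, Cplus, Copp, Cmult, RtoC; simpl. ring. Qed.

(* Fixed points of the Moebius map, stated without division. *)
Definition is_fixed (a g : R) (x T : C) : Prop := (den a g x T * T = 1)%C.

Lemma fixed_nz (a g : R) (x T : C) :
  is_fixed a g x T -> T <> 0%C /\ den a g x T <> 0%C.
Proof.
  unfold is_fixed. intro H. split; intro E; rewrite E in H;
    [rewrite Cmult_0_r in H | rewrite Cmult_0_l in H]; apply C1_nz; symmetry; exact H.
Qed.

Lemma fixed_den (a g : R) (x T : C) : is_fixed a g x T -> den a g x T = Cinv T.
Proof.
  intro H. destruct (fixed_nz _ _ _ _ H) as [Tnz _].
  transitivity (den a g x T * T * Cinv T)%C; [field; exact Tnz|].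
  unfold is_fixed in H. rewrite H. ring.
Qed.

(* The two fixed points T and 1/(g T) are the roots of g T^2 - (x - a) T + 1. *)
Lemma fixed_partner (a g : R) (x T : C) :
  g <> 0 -> is_fixed a g x T -> is_fixed a g x (Cinv (RtoC g * T)).
Proof.
  intros gnz HT. destruct (fixed_nz _ _ _ _ HT) as [Tnz _].
  assert (gC : RtoC g <> 0%C) by (intro H; apply gnz; injection H; auto).
  assert (Exa : (x - RtoC a = RtoC g * T + Cinv T)%C).
  { rewrite <- (fixed_den _ _ _ _ HT). unfold den. ring. }
  unfold is_fixed, den. rewrite Exa. field. split; assumption.
Qed.

Lemma Cmod_partner (g : R) (T : C) :
  g <> 0 -> T <> 0%C -> Cmod (Cinv (RtoC g * T)) = / (Rabs g * Cmod T).
Proof.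
  intros gnz Tnz.
  assert (gC : RtoC g <> 0%C) by (intro H; apply gnz; injection H; auto).
  rewrite Cmod_inv by (apply Cmult_neq_0; assumption). now rewrite Cmod_Rmul.
Qed.

Lemma fixed_exists (a g : R) (x : C) :
  (x - RtoC a <> 0)%C -> exists T, is_fixed a g x T.
Proof.
  intro Hxa. unfold is_fixed, den. destruct (Req_dec g 0) as [-> | gnz].
  - exists (Cinv (x - RtoC a)).
    replace (x - RtoC a - RtoC 0 * Cinv (x - RtoC a))%C with (x - RtoC a)%C by ring.
    apply Cinv_r, Hxa.
  - assert (gC : RtoC g <> 0%C) by (intro H; apply gnz; injection H; auto).
    set (y := (x - RtoC a)%C).
    destruct (C_sqrt_exists (y * y - RtoC 4 * RtoC g)%C) as [s Hs].
    exists ((y + s) / (RtoC 2 * RtoC g))%C. fold y.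
    transitivity ((y * y - s * s) / (RtoC 4 * RtoC g))%C; [field; exact gC|].
    rewrite Hs. field. exact gC.
Qed.

Lemma small_fixed_exists (a g : R) (x : C) :
  (x - RtoC a <> 0)%C -> exists T, is_fixed a g x T /\ Rabs g * (Cmod T * Cmod T) <= 1.
Proof.
  intro Hxa. destruct (fixed_exists a g x Hxa) as [T0 H0].
  destruct (Rle_dec (Rabs g * (Cmod T0 * Cmod T0)) 1) as [Hle | Hgt];
    [exists T0; auto|].
  assert (gnz : g <> 0) by (intro E; rewrite E, Rabs_R0 in Hgt; lra).
  destruct (fixed_nz _ _ _ _ H0) as [T0nz _].
  exists (Cinv (RtoC g * T0)). split; [apply fixed_partner; assumption|].
  rewrite Cmod_partner by assumption.
  assert (0 < Rabs g) by (apply Rabs_pos_lt, gnz).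
  assert (0 < Cmod T0) by (apply Cmod_gt_0, T0nz).
  replace (Rabs g * (/ (Rabs g * Cmod T0) * / (Rabs g * Cmod T0)))
    with (/ (Rabs g * (Cmod T0 * Cmod T0))) by (field; lra).
  rewrite <- Rinv_1. apply Rinv_le_contravar; lra.
Qed.

Lemma tail_iter_step_diff (a g : R) (x P : C) (n : nat) :
  is_fixed a g x P -> den a g x (tail_iter a g x n) <> 0%C ->
  (tail_iter a g x (S n) - P =
   RtoC g * (tail_iter a g x n - P) * tail_iter a g x (S n) * P)%C.
Proof.
  unfold is_fixed. intros HP Hd. simpl tail_iter.
  set (t := tail_iter a g x n) in *.
  assert (Ht : (Cinv (den a g x t) * den a g x t = 1)%C) by (apply Cinv_l, Hd).
  set (v := Cinv (den a g x t)) in *.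
  transitivity (v * (den a g x P * P) - P * (v * den a g x t))%C.
  - rewrite HP, Ht. ring.
  - unfold den. ring.
Qed.

Lemma tail_iter_ratio (a g : R) (x P Q : C) :
  is_fixed a g x P -> is_fixed a g x Q ->
  (forall n, den a g x (tail_iter a g x n) <> 0%C) ->
  forall n, Cmod (tail_iter a g x n - P) * Cmod Q ^ S n =
            Cmod (tail_iter a g x n - Q) * Cmod P ^ S n.
Proof.
  intros HP HQ Hd n. induction n as [|n IH].
  - simpl tail_iter. replace (0 - P)%C with (- P)%C by ring.
    replace (0 - Q)%C with (- Q)%C by ring. rewrite !Cmod_opp. ring.
  - rewrite (tail_iter_step_diff _ _ _ P), (tail_iter_step_diff _ _ _ Q) by auto.
    rewrite !Cmod_mult.
    transitivity (Cmod (RtoC g) * Cmod (tail_iter a g x (S n)) * Cmod P * Cmod Q *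
                  (Cmod (tail_iter a g x n - P) * Cmod Q ^ S n));
      [rewrite <- !tech_pow_Rmult; ring|].
    rewrite IH. rewrite <- !tech_pow_Rmult. ring.
Qed.

Lemma geometric_conv (s : nat -> C) (l : C) (K q : R) :
  0 <= q < 1 -> (forall n, Cmod (s n - l) <= K * q ^ n) ->
  forall eps, 0 < eps -> exists N, forall n, (N <= n)%nat -> Cmod (s n - l) < eps.
Proof.
  intros Hq Hs eps Heps.
  pose proof (Rabs_pos K) as HK.
  destruct (pow_lt_1_zero q ltac:(rewrite Rabs_pos_eq; lra) (eps / (Rabs K + 1)))
    as [N HN]; [apply Rdiv_lt_0_compat; lra|].
  exists N. intros n Hn. specialize (HN n Hn).
  rewrite Rabs_pos_eq in HN by (apply pow_le; lra).
  assert (Hqn : q ^ n * (Rabs K + 1) < eps).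
  { replace eps with (eps / (Rabs K + 1) * (Rabs K + 1)) by (field; lra).
    apply Rmult_lt_compat_r; lra. }
  pose proof (Rle_abs K). pose proof (pow_le q n (proj1 Hq)).
  apply Rle_lt_trans with (K * q ^ n); [apply Hs | nra].
Qed.

Lemma tail_iter_bound (a g : R) (x : C) (m : R) : 0 < m ->
  (forall n, m <= Cmod (den a g x (tail_iter a g x n))) ->
  forall n, Cmod (tail_iter a g x n) <= / m.
Proof.
  intros Hm Hden [|n]; simpl tail_iter.
  - rewrite Cmod_0. apply Rlt_le, Rinv_0_lt_compat, Hm.
  - specialize (Hden n).
    rewrite Cmod_inv by (apply Cmod_gt_0; lra).
    apply Rinv_le_contravar; assumption.
Qed.

Lemma tail_iter_geometric (a g : R) (x T : C) (m : R) :
  is_fixed a g x T -> Rabs g * (Cmod T * Cmod T) < 1 -> 0 < m ->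
  (forall n, m <= Cmod (den a g x (tail_iter a g x n))) ->
  exists K q, 0 <= q < 1 /\ forall n, Cmod (tail_iter a g x n - T) <= K * q ^ n.
Proof.
  intros HT Hq Hm Hden.
  assert (Hd : forall n, den a g x (tail_iter a g x n) <> 0%C)
    by (intro n; apply Cmod_gt_0; specialize (Hden n); lra).
  destruct (fixed_nz _ _ _ _ HT) as [Tnz _].
  destruct (Req_dec g 0) as [g0 | gnz].
  - (* for g = 0 the orbit is constant from the first step on *)
    exists (Cmod T), 0. split; [lra|]. intros [|n].
    + simpl. replace (0 - T)%C with (- T)%C by ring. rewrite Cmod_opp. lra.
    + rewrite (tail_iter_step_diff _ _ _ T) by auto. subst g.
      rewrite Cmult_0_l, !Cmult_0_l, Cmod_0, pow_i by lia. lra.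
  - (* otherwise compare with the repelling fixed point U = 1/(g T) *)
    set (U := Cinv (RtoC g * T)).
    assert (HU : is_fixed a g x U) by (apply fixed_partner; assumption).
    set (q := Rabs g * (Cmod T * Cmod T)).
    assert (Hg : 0 < Rabs g) by (apply Rabs_pos_lt, gnz).
    assert (HmT : 0 < Cmod T) by (apply Cmod_gt_0, Tnz).
    assert (HmU : Cmod U = / (Rabs g * Cmod T)) by (apply Cmod_partner; assumption).
    assert (HUp : 0 < Cmod U) by (rewrite HmU; apply Rinv_0_lt_compat; nra).
    assert (HTU : Cmod T = q * Cmod U) by (rewrite HmU; unfold q; field; lra).
    exists ((/ m + Cmod U) * q), q. split; [unfold q; split; [nra | exact Hq]|].
    intro n.
    pose proof (tail_iter_ratio _ _ _ _ _ HT HU Hd n) as Hr.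
    rewrite HTU, Rpow_mult_distr in Hr.
    assert (HUn : 0 < Cmod U ^ S n) by (apply pow_lt, HUp).
    apply (Rmult_le_reg_r (Cmod U ^ S n)); [exact HUn|].
    rewrite Hr, <- tech_pow_Rmult.
    assert (Hdist : Cmod (tail_iter a g x n - U) <= / m + Cmod U).
    { apply Rle_trans with (Cmod (tail_iter a g x n) + Cmod (- U)%C);
        [apply Cmod_triangle|].
      rewrite Cmod_opp. pose proof (tail_iter_bound _ _ _ _ Hm Hden n). lra. }
    assert (0 <= q) by (unfold q; nra).
    assert (0 <= q ^ n) by (apply pow_le; lra).
    assert (0 <= q * q ^ n * Cmod U ^ S n) by (apply Rmult_le_pos; nra).
    replace ((/ m + Cmod U) * q * q ^ n * Cmod U ^ S n)
      with ((/ m + Cmod U) * (q * q ^ n * Cmod U ^ S n)) by ring.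
    apply Rmult_le_compat_r; assumption.
Qed.

Lemma Cinv_den_diff (beta gamma : R) (x s t : C) :
  den beta gamma x s <> 0%C -> den beta gamma x t <> 0%C ->
  Cmod (Cinv (den beta gamma x s) - Cinv (den beta gamma x t)) =
  Rabs gamma * Cmod (s - t) / (Cmod (den beta gamma x s) * Cmod (den beta gamma x t)).
Proof.
  intros Hs Ht.
  assert (E : (Cinv (den beta gamma x s) - Cinv (den beta gamma x t) =
    (den beta gamma x t - den beta gamma x s) *
    Cinv (den beta gamma x s) * Cinv (den beta gamma x t))%C)
    by (field; split; assumption).
  replace (den beta gamma x t - den beta gamma x s)%C with (RtoC gamma * (s - t))%C in E
    by (unfold den; ring).
  rewrite E, !Cmod_mult, !Cmod_inv, Cmod_R by assumption.
  unfold Rdiv. rewrite Rinv_mult. ring.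
Qed.

Lemma G_fm_of_fixed (b c beta gamma : R) (z w : Defs.C) (x T : C) (m : R) :
  toC z = x ->
  is_fixed (b + beta) (c + gamma) x T ->
  Rabs (c + gamma) * (Cmod T * Cmod T) < 1 -> 0 < m ->
  (forall n, m <= Cmod (den (b + beta) (c + gamma) x
                          (tail_iter (b + beta) (c + gamma) x n))) ->
  (forall n, m <= Cmod (den beta gamma x (tail_iter (b + beta) (c + gamma) x n))) ->
  den beta gamma x T <> 0%C ->
  toC w = Cinv (den beta gamma x T) ->
  G_fm b c beta gamma z w.
Proof.
  intros Hzx HT Hq Hm Htail Htop HuT Hw.
  set (t := tail_iter (b + beta) (c + gamma) x) in *.
  destruct (tail_iter_geometric _ _ _ _ _ HT Hq Hm Htail) as [K [q [Hq01 Hgeo]]].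
  set (u := den beta gamma x T) in *.
  assert (Hu : 0 < Cmod u) by (apply Cmod_gt_0, HuT).
  assert (Hconv := geometric_conv (fun n => Cinv (den beta gamma x (t n))) (Cinv u)
                     (Rabs gamma * K / (m * Cmod u)) q Hq01).
  intros eps Heps. destruct Hconv with eps as [N HN]; [|exact Heps|].
  - intro n. specialize (Htop n). specialize (Hgeo n).
    unfold u. rewrite Cinv_den_diff by first [exact HuT | apply Cmod_gt_0; lra]. fold u.
    pose proof (Rabs_pos gamma). pose proof (Cmod_ge_0 (t n - T)%C).
    replace (Rabs gamma * K / (m * Cmod u) * q ^ n)
      with (Rabs gamma * (K * q ^ n) * / (m * Cmod u)) by (field; lra).
    apply Rmult_le_compat.
    + nra.
    + apply Rlt_le, Rinv_0_lt_compat. nra.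
    + apply Rmult_le_compat_l; assumption.
    + apply Rinv_le_contravar; nra.
  - exists N. intros n Hn.
    rewrite Cnorm_toC, toC_sub, cfd_top, Hw, Hzx. exact (HN n Hn).
Qed.

(* Upper half plane: the orbit stays in the closed lower half plane, so every
   shifted denominator has modulus at least Im x. *)
Lemma uhp_tail_iter_Im (a g : R) (x : C) : 0 <= g -> 0 < Im x ->
  forall n, Im (tail_iter a g x n) <= 0.
Proof.
  intros Hg Hx n. induction n as [|n IH]; simpl tail_iter.
  - simpl. lra.
  - apply Im_Cinv_nonpos. rewrite Im_den. nra.
Qed.

Lemma uhp_den_lower (a g a' g' : R) (x : C) (n : nat) : 0 <= g -> 0 <= g' -> 0 < Im x ->
  Im x <= Cmod (den a' g' x (tail_iter a g x n)).
Proof.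
  intros Hg Hg' Hx. eapply Rle_trans; [|apply Im_le_Cmod].
  rewrite Im_den. pose proof (uhp_tail_iter_Im a g x Hg Hx n). nra.
Qed.

Lemma uhp_fixed_exists (a g : R) (x : C) : 0 <= g -> 0 < Im x ->
  exists T, Im T < 0 /\ is_fixed a g x T.
Proof.
  intros Hg Hx.
  assert (Hxa : (x - RtoC a <> 0)%C).
  { apply nz_of_Im_pos. replace (x - RtoC a)%C with (den a 0 x 0) by (unfold den; ring).
    rewrite Im_den. lra. }
  destruct (fixed_exists a g x Hxa) as [T0 H0].
  destruct (Rlt_dec (Im T0) 0) as [Hn | Hp]; [exists T0; auto|].
  (* if Im T0 >= 0 then 0 < Im x <= g Im T0, and the partner lies below *)
  assert (Hd : Im (den a g x T0) <= 0)
    by (rewrite (fixed_den _ _ _ _ H0); apply Im_Cinv_nonpos; lra).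
  rewrite Im_den in Hd.
  assert (gnz : g <> 0) by (intro E; subst g; lra).
  exists (Cinv (RtoC g * T0)). split; [|apply fixed_partner; assumption].
  apply Im_Cinv_neg. rewrite im_scal_l. nra.
Qed.

Lemma uhp_fixed_attracting (a g : R) (x T : C) : 0 <= g -> 0 < Im x ->
  is_fixed a g x T -> Im T < 0 -> Rabs g * (Cmod T * Cmod T) < 1.
Proof.
  intros Hg Hx HT HiT. rewrite Rabs_pos_eq by exact Hg.
  pose proof (f_equal Im (fixed_den _ _ _ _ HT)) as E.
  rewrite Im_den, Im_Cinv in E.
  assert (HN : Cmod T * Cmod T = Re T ^ 2 + Im T ^ 2) by (rewrite <- Cmod2_alt; ring).
  assert (HNp : 0 < Re T ^ 2 + Im T ^ 2) by (simpl; nra).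
  rewrite HN. set (N := Re T ^ 2 + Im T ^ 2) in *.
  assert (Hk : / N * N = 1) by (field; lra).
  unfold Rdiv in E. nra.
Qed.

Lemma monotone_fm (b c beta beta' gamma gamma' : R) :
  0 < gamma -> 0 <= gamma' -> - gamma <= c ->
  monotone_conv_eq (G_fm b c beta gamma)
                   (G_fm (b + beta) (c + gamma) beta' gamma')
                   (G_fm b c (beta + beta') (gamma + gamma')).
Proof.
  intros Hga Hga' Hc z Hz.
  set (x := toC z). assert (Hx : 0 < Im x) by exact Hz.
  assert (Hg : 0 <= c + gamma + gamma') by lra.
  destruct (uhp_fixed_exists (b + beta + beta') (c + gamma + gamma') x Hg Hx)
    as [T [HiT HT]].
  pose proof (uhp_fixed_attracting _ _ _ _ Hg Hx HT HiT) as Hq.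
  (* F = 1/G_2(z) is again in the upper half plane *)
  set (F := den beta' gamma' x T).
  assert (HF : Im x <= Im F) by (unfold F; rewrite Im_den; nra).
  assert (HTF : is_fixed (b + beta) (c + gamma) F T)
    by (unfold is_fixed, F; rewrite den_compose; exact HT).
  assert (HzF : toC (Defs.Cinv (ofC (Cinv F))) = F).
  { rewrite toC_inv, toC_ofC. field. apply nz_of_Im_pos. lra. }
  exists (ofC (Cinv F)), (ofC (Cinv (den beta gamma F T))). split; [|split].
  - apply (G_fm_of_fixed _ _ _ _ _ _ x T (Im x)); auto.
    + intro n. apply uhp_den_lower; lra.
    + intro n. apply uhp_den_lower; lra.
    + apply nz_of_Im_pos. rewrite Im_den. nra.
  - apply (G_fm_of_fixed _ _ _ _ _ _ F T (Im x)); auto.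
    + rewrite !Rabs_pos_eq in * by lra. pose proof (Cmod_ge_0 T). nra.
    + intro n. eapply Rle_trans; [exact HF|]. apply uhp_den_lower; lra.
    + intro n. eapply Rle_trans; [exact HF|]. apply uhp_den_lower; lra.
    + apply nz_of_Im_pos. unfold F. rewrite den_compose, Im_den. nra.
  - apply (G_fm_of_fixed _ _ _ _ _ _ x T (Im x)); rewrite <- ?Rplus_assoc; auto.
    + intro n. apply uhp_den_lower; lra.
    + intro n. apply uhp_den_lower; lra.
    + apply nz_of_Im_pos. rewrite Im_den. nra.
    + rewrite toC_ofC. unfold F. rewrite den_compose. reflexivity.
Qed.

(* Neighbourhood of infinity: if |x - a| >= K and g is small compared with K^2,
   the disc of radius 2/K is mapped into itself, away from the pole. *)
Lemma den_lower_far (a g : R) (x t : C) (K : R) :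
  0 <= g -> 0 < K -> 4 * g <= K * K -> K <= Cmod (x - RtoC a)%C ->
  Cmod t <= 2 / K -> K / 2 <= Cmod (den a g x t).
Proof.
  intros Hg HK HgK Hx Ht.
  pose proof (Cmod_rev (x - RtoC a)%C (RtoC g * t)%C) as H.
  rewrite Cmod_Rmul, Rabs_pos_eq in H by exact Hg.
  assert (g * (2 / K) <= K / 2).
  { apply (Rmult_le_reg_r (2 * K)); [lra|].
    replace (g * (2 / K) * (2 * K)) with (4 * g) by (field; lra).
    replace (K / 2 * (2 * K)) with (K * K) by (field; lra). exact HgK. }
  assert (g * Cmod t <= g * (2 / K)) by (apply Rmult_le_compat_l; assumption).
  unfold den. lra.
Qed.

Lemma tail_iter_far (a g : R) (x : C) (K : R) :
  0 <= g -> 0 < K -> 4 * g <= K * K -> K <= Cmod (x - RtoC a)%C ->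
  forall n, Cmod (tail_iter a g x n) <= 2 / K.
Proof.
  intros Hg HK HgK Hx n. induction n as [|n IH]; simpl tail_iter.
  - rewrite Cmod_0. apply Rlt_le, Rdiv_lt_0_compat; lra.
  - pose proof (den_lower_far a g x _ K Hg HK HgK Hx IH) as Hd.
    rewrite Cmod_inv by (apply Cmod_gt_0; lra).
    replace (2 / K) with (/ (K / 2)) by (field; lra).
    apply Rinv_le_contravar; lra.
Qed.

(* The radius 1/(4 R_scale b c) of the disc on which we build the R-transform. *)
Definition R_scale (b c : R) : R := 20 + Rabs b + Rabs c.

Lemma small_fixed_bound (b c : R) (W Rw : C) :
  0 < Cmod W -> Cmod W * (4 * R_scale b c) < 1 ->
  is_fixed b c (Cinv W) Rw -> Rabs c * (Cmod Rw * Cmod Rw) <= 1 ->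
  Cmod Rw <= 2 * Cmod W.
Proof.
  unfold R_scale. intros Hw Hs HR Hc.
  assert (Wnz : W <> 0%C) by (apply Cmod_gt_0, Hw).
  set (Y := Cmod (Cinv W)).
  assert (HY : Y * Cmod W = 1) by (unfold Y; rewrite Cmod_inv by exact Wnz; field; lra).
  set (V := den b c (Cinv W) Rw).
  (* 1/|W| <= |V| + |b| + |c| |Rw| and |V| |Rw| = 1 *)
  assert (HV : Y <= Cmod V + Rabs b + Rabs c * Cmod Rw).
  { unfold Y. replace (Cinv W) with (V + (RtoC b + RtoC c * Rw))%C by (unfold V, den; ring).
    eapply Rle_trans; [apply Cmod_triangle|].
    pose proof (Cmod_triangle (RtoC b) (RtoC c * Rw)%C) as H.
    rewrite Cmod_R, Cmod_Rmul in H. lra. }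
  assert (H1 : Cmod V * Cmod Rw = 1) by (rewrite <- Cmod_mult; unfold V; rewrite HR; apply Cmod_1).
  pose proof (Cmod_ge_0 Rw). pose proof (Rabs_pos b). pose proof (Rabs_pos c).
  assert (Rabs c * Cmod Rw <= 1 + Rabs c) by (destruct (Rle_dec 1 (Cmod Rw)); nra).
  assert (Y * Cmod W * (4 * (20 + Rabs b + Rabs c)) < Y) by nra.
  rewrite HY in *. nra.
Qed.

Lemma G_fm_at_R_transform (b c gam : R) (z w : Defs.C) (Rw : C) :
  -1 <= c -> 1 <= gam <= 2 ->
  0 < Cmod (toC w) -> Cmod (toC w) * (4 * R_scale b c) < 1 ->
  is_fixed b c (Cinv (toC w)) Rw -> Cmod Rw <= 2 * Cmod (toC w) ->
  toC z = (RtoC gam * Rw + Cinv (toC w))%C ->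
  G_fm b c 0 gam z w.
Proof.
  intros Hc Hgam Hw Hs HR HRw Hz.
  set (W := toC w) in *. set (D := R_scale b c) in *.
  set (x := (RtoC gam * Rw + Cinv W)%C) in *.
  assert (Wnz : W <> 0%C) by (apply Cmod_gt_0, Hw).
  assert (HY : Cmod (Cinv W) * Cmod W = 1)
    by (rewrite Cmod_inv by exact Wnz; field; lra).
  set (Y := Cmod (Cinv W)) in *. set (K := Y / 2).
  pose proof (Rabs_pos b). pose proof (Rabs_pos c). pose proof (Cmod_ge_0 Rw).
  assert (HD : 20 + Rabs b + Rabs c = D) by reflexivity.
  assert (HYD : 4 * D < Y) by nra.
  assert (HW : Cmod W * 80 < 1) by nra.
  assert (Hfar : forall a, Rabs a <= D -> K <= Cmod (x - RtoC a)%C).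
  { intros a Ha.
    replace (x - RtoC a)%C with (Cinv W - (RtoC a - RtoC gam * Rw))%C
      by (unfold x; ring).
    pose proof (Cmod_rev (Cinv W) (RtoC a - RtoC gam * Rw)%C) as Hinv. fold Y in Hinv.
    pose proof (Cmod_triangle (RtoC a) (- (RtoC gam * Rw))%C) as Htri.
    rewrite Cmod_opp, Cmod_Rmul, Cmod_R, (Rabs_pos_eq gam) in Htri by lra.
    replace (RtoC a + - (RtoC gam * Rw))%C with (RtoC a - RtoC gam * Rw)%C in Htri by ring.
    assert (gam * Cmod Rw <= 2 * (2 * Cmod W)) by (apply Rmult_le_compat; lra).
    unfold K. lra. }
  assert (Hsmall : forall g, g <= D -> 4 * g <= K * K) by (intros; unfold K; nra).
  assert (Hgc : 0 <= c + gam <= D) by (pose proof (Rle_abs c); lra).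
  assert (HRx : is_fixed (b + 0) (c + gam) x Rw).
  { unfold is_fixed. replace (den (b + 0) (c + gam) x Rw) with (den b c (Cinv W) Rw)
      by (unfold den, x; rewrite !RtoC_plus; ring). exact HR. }
  assert (Hx0 : den 0 gam x Rw = Cinv W) by (unfold den, x; ring).
  assert (HK : 0 < K) by (unfold K; lra).
  assert (Hxb : K <= Cmod (x - RtoC (b + 0))%C) by (apply Hfar; rewrite Rplus_0_r; lra).
  pose proof (tail_iter_far (b + 0) (c + gam) x K (proj1 Hgc) HK
                (Hsmall _ (proj2 Hgc)) Hxb) as Horb.
  apply (G_fm_of_fixed _ _ _ _ _ _ x Rw (K / 2)); auto; try lra.
  - rewrite Rabs_pos_eq by lra.
    assert (Cmod Rw * Cmod Rw <= 4 * (Cmod W * Cmod W)) by nra. nra.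
  - intro n. apply den_lower_far; auto; try lra. apply Hsmall; lra.
  - intro n. apply den_lower_far; auto; try lra.
    + apply Hsmall; lra.
    + apply Hfar. rewrite Rabs_R0. lra.
  - rewrite Hx0. apply Cmod_gt_0. fold Y. lra.
  - rewrite Hx0. fold W. field. exact Wnz.
Qed.

Lemma free_fm (b c : R) : -1 <= c ->
  free_conv_eq (G_fm b c 0 1) (G_fm b c 0 1) (G_fm b c 0 2).
Proof.
  intro Hc. set (D := R_scale b c).
  assert (HD : 20 <= D) by (unfold D, R_scale; pose proof (Rabs_pos b); pose proof (Rabs_pos c); lra).
  set (P := fun (W Rw : C) => is_fixed b c (Cinv W) Rw /\ Cmod Rw <= 2 * Cmod W).
  assert (HP : forall W, 0 < Cmod W -> Cmod W * (4 * D) < 1 -> exists Rw, P W Rw).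
  { intros W Hw Hs.
    assert (Wnz : W <> 0%C) by (apply Cmod_gt_0, Hw).
    assert (Hxa : (Cinv W - RtoC b <> 0)%C).
    { apply Cmod_gt_0. pose proof (Cmod_rev (Cinv W) (RtoC b)) as H.
      rewrite Cmod_R, Cmod_inv in H by exact Wnz.
      assert (/ Cmod W * Cmod W = 1) by (field; lra).
      unfold D, R_scale in Hs. pose proof (Rabs_pos c). nra. }
    destruct (small_fixed_exists b c (Cinv W) Hxa) as [Rw [HR Hsm]].
    exists Rw. split; [exact HR|]. apply (small_fixed_bound b c); assumption. }
  set (Rt := fun w : Defs.C => ofC (epsilon (inhabits (RtoC 0)) (P (toC w)))).
  exists (/ (4 * D)), 1. split; [apply Rinv_0_lt_compat; lra|].
  exists Rt, Rt. intros w [Hw1 Hw2]. rewrite Cnorm_toC in Hw1, Hw2.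
  assert (Hs : Cmod (toC w) * (4 * D) < 1).
  { apply (Rmult_lt_compat_r (4 * D)) in Hw2; [|lra].
    rewrite Rinv_l in Hw2 by lra. exact Hw2. }
  destruct (epsilon_spec (inhabits (RtoC 0)) (P (toC w)) (HP _ Hw1 Hs)) as [HR HRw].
  assert (HRt : toC (Rt w) = epsilon (inhabits (RtoC 0)) (P (toC w))) by apply toC_ofC.
  assert (Hn : Defs.Cnorm (Rt w) <= 1).
  { rewrite Cnorm_toC, HRt. assert (Cmod (toC w) * 80 < 1) by nra. lra. }
  repeat split; try exact Hn.
  - apply (G_fm_at_R_transform b c 1 _ w (toC (Rt w))); rewrite ?HRt; auto; try lra.
    rewrite toC_add, toC_inv, HRt. ring.
  - apply (G_fm_at_R_transform b c 1 _ w (toC (Rt w))); rewrite ?HRt; auto; try lra.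
    rewrite toC_add, toC_inv, HRt. ring.
  - apply (G_fm_at_R_transform b c 2 _ w (toC (Rt w))); rewrite ?HRt; auto; try lra.
    rewrite !toC_add, toC_inv, HRt. ring.
Qed.

Theorem mainTheorem11 :
  (forall b c beta beta' gamma gamma' : R,
     0 < gamma -> 0 <= gamma' -> - gamma <= c ->
     monotone_conv_eq (G_fm b c beta gamma)
                      (G_fm (b + beta) (c + gamma) beta' gamma')
                      (G_fm b c (beta + beta') (gamma + gamma')))
  /\
  (forall b c : R, -1 <= c ->
     monotone_conv_eq (G_fm b c 0 1) (G_fm b (c + 1) 0 1) (G_fm b c 0 2) /\
     free_conv_eq (G_fm b c 0 1) (G_fm b c 0 1) (G_fm b c 0 2)).
Proof.
  split.
  - exact monotone_fm.
  - intros b c Hc. split.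
    +
      pose proof (monotone_fm b c 0 0 1 1 ltac:(lra) ltac:(lra) ltac:(lra)) as H.
      replace (b + 0) with b in H by ring. replace (0 + 0) with 0 in H by ring.
      replace (1 + 1) with 2 in H by ring. exact H.
    + exact (free_fm b c Hc).
Qed.
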